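(* Let $n_x,n_y,n_z$ be pairwise relatively prime positive integers and let $K$ and $K'$ be Lissajous knots with frequencies $(n_x,n_y,n_z)$, $\phi_x=0$, whose phase shift pairs $(\phi_y,\phi_z)$ and $(\phi_y',\phi_z')$ belong to regions of the phase torus separated by $2n_y$ singular lines of the form $\phi_z=\frac{n_z}{n_y}\phi_y+l\frac{\pi}{n_y}$ ($l\in\mathbb{Z}$) (i.e., one region is reached from the other by successively crossing $2n_y$ consecutive such lines). Then all Type I crossings are the same (have the same over/under information) for both knots.
   Context: A Lissajous knot with frequencies $(n_x,n_y,n_z)$ (pairwise relatively prime integers) and phase shifts $(\phi_x,\phi_y,\phi_z)$ is the curve $K(t)=(\cos(n_xt+\phi_x),\cos(n_yt+\phi_y),\cos(n_zt+\phi_z))$, $0\le t\le2\pi$, when it is embedded. Take $\phi_x=0$. The phase torus is the torus of pairs $(\phi_y,\phi_z)\in[0,2\pi]\times[0,2\pi]$; the curve fails to be embedded exactly on the singular lines $\phi_z=\frac{n_z}{n_y}\phi_y+l\frac{\pi}{n_y}$, $\phi_z=l\frac{\pi}{n_x}$, $\phi_y=l\frac{\pi}{n_x}$ ($l\in\mathbb{Z}$), and the regions are the connected components of the complement of these lines. The Type I crossings of the projection of $K$ to the $xy$-plane are the double points given by parameter pairs $(t_1,t_2)=\big((-\frac{k}{n_x}+\frac{j}{n_y})\pi-\frac{\phi_y}{n_y},(\frac{k}{n_x}+\frac{j}{n_y})\pi-\frac{\phi_y}{n_y}\big)$ with $1\le k\le n_x-1$ and integers $j$ with $1+\lfloor \frac{n_y}{n_x}k+\frac{\phi_y}{\pi}\rfloor\le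 j\le \lfloor 2n_y-\frac{n_y}{n_x}k+\frac{\phi_y}{\pi}\rfloor$; $(k,j)$ are the parameters of the crossing. *)

From Stdlib Require Import Reals ZArith Arith ROrderedType.
Open Scope R_scope.

(* floor of a real number: up x is the integer with x < up x <= x + 1 *)
Definition floorR (x : R) : Z := (up x - 1)%Z.

Definition lissajous (nx ny nz : nat) (phy phz : R) (t : R) : R * R * R :=
  (cos (INR nx * t), cos (INR ny * t + phy), cos (INR nz * t + phz)).

Definition embedded (nx ny nz : nat) (phy phz : R) : Prop :=
  forall t1 t2, 0 <= t1 < 2 * PI -> 0 <= t2 < 2 * PI ->
    lissajous nx ny nz phy phz t1 = lissajous nx ny nz phy phz t2 -> t1 = t2.

Definition pairwise_coprime_pos (nx ny nz : nat) : Prop :=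
  (0 < nx)%nat /\ (0 < ny)%nat /\ (0 < nz)%nat /\
  Nat.gcd nx ny = 1%nat /\ Nat.gcd nx nz = 1%nat /\ Nat.gcd ny nz = 1%nat.

Definition on_singular_line (nx ny nz : nat) (phy phz : R) : Prop :=
  exists l : Z,
    phz = INR nz / INR ny * phy + IZR l * PI / INR ny \/
    phz = IZR l * PI / INR nx \/
    phy = IZR l * PI / INR nx.

(* Index of the band between consecutive lines
   phi_z = (nz/ny) phi_y + l pi/ny  (the point lies strictly between the
   lines with l = family_index and l = family_index + 1). *)
Definition family_index (ny nz : nat) (phy phz : R) : Z :=
  floorR ((INR ny * phz - INR nz * phy) / PI).

Definition phy_strip_index (nx : nat) (phy : R) : Z :=
  floorR (INR nx * phy / PI).

Definition typeI_param (nx ny : nat) (phy : R) (k j : Z) : Prop :=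
  (1 <= k <= Z.of_nat nx - 1)%Z /\
  (1 + floorR (INR ny / INR nx * IZR k + phy / PI) <= j)%Z /\
  (j <= floorR (2 * INR ny - INR ny / INR nx * IZR k + phy / PI))%Z.

Definition typeI_times (nx ny : nat) (phy : R) (k j : Z) : R * R :=
  ((- IZR k / INR nx + IZR j / INR ny) * PI - phy / INR ny,
   (IZR k / INR nx + IZR j / INR ny) * PI - phy / INR ny).

(* Over/under information of the crossing: comparison of the heights
   z(t1) and z(t2) of the two strands. *)
Definition typeI_overunder (nx ny nz : nat) (phy phz : R) (k j : Z)
  : comparison :=
  let tt := typeI_times nx ny phy k j in
  Rcompare (cos (INR nz * fst tt + phz)) (cos (INR nz * snd tt + phz)).

(* At a Type I crossing (k, j) the two strands have z-phases [A - d] and [A + d],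
   where [A] is the z-phase at the mean parameter and [d = nz k pi / nx], so the
   over/under information is the sign of [cos (A - d) - cos (A + d) = 2 sin A sin d].
   The set of crossing parameters only depends on the strip of phi_y between the
   lines phi_y = l pi/nx.  Writing [F] for the band index of the phase pair between
   the lines phi_z = (nz/ny) phi_y + l pi/ny, the phase [A] lies strictly inside
   [(m pi, (m+1) pi)] with [m = (nz j + F) div ny]; crossing [2 ny] lines changes
   [F] by [2 ny], hence [m] by 2, so [sin A] keeps its sign. *)

From Stdlib Require Import Reals ZArith Arith.
From Stdlib Require Import Lra Lia Psatz ROrderedType.
Open Scope R_scope.

Lemma floorR_spec x : IZR (floorR x) <= x < IZR (floorR x) + 1.
Proof.
  unfold floorR. destruct (archimed x) as [H1 H2].
  rewrite minus_IZR. lra.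
Qed.

Lemma floorR_unique m x : IZR m <= x < IZR m + 1 -> floorR x = m.
Proof.
  intros [H1 H2]. unfold floorR.
  assert (E : (m + 1)%Z = up x) by (apply tech_up; rewrite plus_IZR; lra).
  lia.
Qed.

Lemma floorR_add_div (c n : Z) u : (0 < n)%Z ->
  floorR ((IZR c + u) / IZR n) = ((c + floorR u) / n)%Z.
Proof.
  intros Hn. set (s := floorR u). set (q := ((c + s) / n)%Z).
  pose proof (floorR_spec u) as Hs. fold s in Hs.
  pose proof (Z.div_mod (c + s) n ltac:(lia)) as Hd.
  pose proof (Z.mod_pos_bound (c + s) n Hn) as Hb.
  fold q in Hd.
  assert (Hlo : (n * q <= c + s)%Z) by lia.
  assert (Hhi : (c + s + 1 <= n * q + n)%Z) by lia.
  apply IZR_le in Hlo. apply IZR_le in Hhi.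
  rewrite !plus_IZR, mult_IZR in Hlo. rewrite !plus_IZR, mult_IZR in Hhi.
  assert (Hn' : 0 < IZR n) by (apply IZR_lt; lia).
  apply floorR_unique.
  set (y := (IZR c + u) / IZR n).
  assert (Ey : y * IZR n = IZR c + u) by (unfold y; field; lra).
  split; nra.
Qed.

Lemma sin_period_Z x q : sin (x + 2 * IZR q * PI) = sin x.
Proof.
  destruct q as [|p|p].
  - f_equal. ring.
  - rewrite <- (positive_nat_Z p), <- INR_IZR_INZ. apply sin_period.
  - rewrite <- Pos2Z.opp_pos, opp_IZR, <- (positive_nat_Z p), <- INR_IZR_INZ.
    rewrite <- (sin_period (x + 2 * - INR (Pos.to_nat p) * PI) (Pos.to_nat p)).
    f_equal. ring.
Qed.

Lemma sin_sign_band (m : Z) x : IZR m * PI < x < (IZR m + 1) * PI ->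
  if Z.even m then 0 < sin x else sin x < 0.
Proof.
  intros [H1 H2].
  destruct (Z.Even_or_Odd m) as [[q ->]|[q ->]].
  - rewrite Z.even_mul. simpl.
    rewrite <- (sin_period_Z x (- q)), opp_IZR.
    rewrite mult_IZR in H1, H2. apply sin_gt_0; lra.
  - rewrite Z.even_add, Z.even_mul. simpl.
    rewrite <- (sin_period_Z x (- q)), opp_IZR.
    rewrite plus_IZR, mult_IZR in H1, H2. apply sin_lt_0; lra.
Qed.

Lemma sin_mul_pos_of_bands (m m' : Z) x y :
  IZR m * PI < x < (IZR m + 1) * PI ->
  IZR m' * PI < y < (IZR m' + 1) * PI ->
  Z.even m = Z.even m' -> 0 < sin x * sin y.
Proof.
  intros Hx Hy He. apply sin_sign_band in Hx. apply sin_sign_band in Hy.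
  rewrite He in Hx. destruct (Z.even m'); nra.
Qed.

Lemma Rcompare_cos_sub_add a d :
  Rcompare (cos (a - d)) (cos (a + d)) = Rcompare (sin a * sin d) 0.
Proof.
  assert (E : cos (a - d) - cos (a + d) = 2 * (sin a * sin d)).
  { rewrite form2.
    replace ((a - d - (a + d)) / 2) with (- d) by field.
    replace ((a - d + (a + d)) / 2) with a by field.
    rewrite sin_neg. ring. }
  destruct (Rcompare_spec (cos (a - d)) (cos (a + d))),
    (Rcompare_spec (sin a * sin d) 0); solve [reflexivity | lra].
Qed.

Lemma Rcompare_mul_0_same_sign x x' y :
  0 < x * x' -> Rcompare (x * y) 0 = Rcompare (x' * y) 0.
Proof.
  intros Hxx'.
  destruct (Rcompare_spec (x * y) 0), (Rcompare_spec (x' * y) 0);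
    solve [reflexivity | nra].
Qed.

Lemma Zeven_div_add_2mul (a s n : Z) : n <> 0%Z ->
  Z.even ((a + 2 * s * n) / n) = Z.even (a / n).
Proof.
  intros Hn. rewrite Z.div_add by exact Hn.
  rewrite Z.even_add, Z.even_mul. destruct (Z.even (a / n)); reflexivity.
Qed.

Lemma typeI_param_strip (nx ny : nat) (phy phy' : R) (k j : Z) :
  (0 < nx)%nat -> phy_strip_index nx phy = phy_strip_index nx phy' ->
  typeI_param nx ny phy k j <-> typeI_param nx ny phy' k j.
Proof.
  intros Hx Hstrip.
  assert (Hx' : 0 < INR nx) by (apply lt_0_INR; lia).
  pose proof PI_RGT_0.
  assert (Elo : forall p, INR ny / INR nx * IZR k + p / PI =
      (IZR (Z.of_nat ny * k) + INR nx * p / PI) / IZR (Z.of_nat nx)).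
  { intros p. rewrite mult_IZR, <- !INR_IZR_INZ. field. lra. }
  assert (Ehi : forall p, 2 * INR ny - INR ny / INR nx * IZR k + p / PI =
      (IZR (2 * Z.of_nat ny * Z.of_nat nx - Z.of_nat ny * k) + INR nx * p / PI)
        / IZR (Z.of_nat nx)).
  { intros p. rewrite minus_IZR, !mult_IZR, <- !INR_IZR_INZ. field. lra. }
  unfold typeI_param. rewrite !Elo, !Ehi, !floorR_add_div by lia.
  unfold phy_strip_index in Hstrip. rewrite Hstrip. tauto.
Qed.

Definition typeI_mid_phase (ny nz : nat) (phy phz : R) (j : Z) : R :=
  INR nz * (IZR j / INR ny * PI - phy / INR ny) + phz.

Lemma typeI_overunder_mid_phase (nx ny nz : nat) (phy phz : R) (k j : Z) :
  (0 < nx)%nat -> (0 < ny)%nat ->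
  typeI_overunder nx ny nz phy phz k j =
  Rcompare (sin (typeI_mid_phase ny nz phy phz j) *
            sin (INR nz * IZR k * PI / INR nx)) 0.
Proof.
  intros Hx Hy.
  assert (INR nx <> 0) by (apply not_0_INR; lia).
  assert (INR ny <> 0) by (apply not_0_INR; lia).
  rewrite <- Rcompare_cos_sub_add.
  unfold typeI_overunder, typeI_times, typeI_mid_phase; simpl.
  f_equal; f_equal; field; auto.
Qed.

Lemma family_index_strict (nx ny nz : nat) (phy phz : R) :
  (0 < ny)%nat -> ~ on_singular_line nx ny nz phy phz ->
  IZR (family_index ny nz phy phz) < (INR ny * phz - INR nz * phy) / PI
    < IZR (family_index ny nz phy phz) + 1.
Proof.
  intros Hny Hns. unfold family_index.
  set (w := (INR ny * phz - INR nz * phy) / PI).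
  pose proof (floorR_spec w) as [[Hlt|Heq] Hhi]; [lra|exfalso].
  apply Hns. exists (floorR w). left.
  assert (0 < INR ny) by (apply lt_0_INR; lia).
  pose proof PI_RGT_0.
  rewrite Heq. unfold w. field. lra.
Qed.

(* [nz j + (ny phz - nz phy) / pi] lies in the open interval
   [(nz j + F, nz j + F + 1)], which contains no multiple of [ny]; so after
   dividing by [ny] it stays strictly inside one unit band. *)
Lemma typeI_mid_phase_band (nx ny nz : nat) (phy phz : R) (j : Z) :
  (0 < ny)%nat -> ~ on_singular_line nx ny nz phy phz ->
  let m := ((Z.of_nat nz * j + family_index ny nz phy phz) / Z.of_nat ny)%Z in
  IZR m * PI < typeI_mid_phase ny nz phy phz j < (IZR m + 1) * PI.
Proof.
  intros Hny Hns m.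
  pose proof (family_index_strict nx ny nz phy phz Hny Hns) as Hw.
  set (F := family_index ny nz phy phz) in Hw, m.
  set (w := (INR ny * phz - INR nz * phy) / PI) in Hw.
  assert (Fw : floorR w = F) by (apply floorR_unique; lra).
  pose proof (floorR_add_div (Z.of_nat nz * j) (Z.of_nat ny) w ltac:(lia)) as Hf.
  rewrite Fw in Hf. fold m in Hf.
  set (y := (IZR (Z.of_nat nz * j) + w) / IZR (Z.of_nat ny)) in Hf.
  pose proof (floorR_spec y) as [[Hlt|Heq] Hhi]; rewrite Hf in *.
  2:{ exfalso.
      assert (Ew : w = IZR (m * Z.of_nat ny - Z.of_nat nz * j)).
      { rewrite minus_IZR, mult_IZR, Heq. unfold y. field.
        apply not_0_IZR. lia. }
      rewrite Ew in Hw. destruct Hw as [A B].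
      apply lt_IZR in A. rewrite <- plus_IZR in B. apply lt_IZR in B. lia. }
  assert (0 < INR ny) by (apply lt_0_INR; lia).
  pose proof PI_RGT_0.
  assert (E : typeI_mid_phase ny nz phy phz j = PI * y).
  { unfold typeI_mid_phase, y, w. rewrite mult_IZR, <- !INR_IZR_INZ. field. lra. }
  rewrite E. split; nra.
Qed.

Theorem corollary1 (nx ny nz : nat) (phy phz phy' phz' : R) :
  pairwise_coprime_pos nx ny nz ->
  embedded nx ny nz phy phz ->
  embedded nx ny nz phy' phz' ->
  ~ on_singular_line nx ny nz phy phz ->
  ~ on_singular_line nx ny nz phy' phz' ->
  phy_strip_index nx phy = phy_strip_index nx phy' ->
  (family_index ny nz phy' phz' = family_index ny nz phy phz + 2 * Z.of_nat ny)%Z \/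
  (family_index ny nz phy' phz' = family_index ny nz phy phz - 2 * Z.of_nat ny)%Z ->
  forall k j : Z,
    (typeI_param nx ny phy k j <-> typeI_param nx ny phy' k j) /\
    (typeI_param nx ny phy k j ->
       typeI_overunder nx ny nz phy phz k j = typeI_overunder nx ny nz phy' phz' k j).
Proof.
  intros [Hx [Hy _]] _ _ Hns Hns' Hstrip Hfam k j.
  split; [exact (typeI_param_strip nx ny phy phy' k j Hx Hstrip) | intros _].
  rewrite !typeI_overunder_mid_phase by assumption.
  apply Rcompare_mul_0_same_sign.
  eapply sin_mul_pos_of_bands;
    [exact (typeI_mid_phase_band nx ny nz phy phz j Hy Hns)
    |exact (typeI_mid_phase_band nx ny nz phy' phz' j Hy Hns') |].
  assert (Hshift : exists s, family_index ny nz phy' phz' =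
                             (family_index ny nz phy phz + 2 * s * Z.of_nat ny)%Z)
    by (destruct Hfam as [E|E]; [exists 1%Z | exists (-1)%Z]; lia).
  destruct Hshift as [s ->].
  rewrite Z.add_assoc. symmetry. apply Zeven_div_add_2mul. lia.
Qed.
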